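(* Let $M$ be a bounded pointed metric space and let $X\subset \mathrm{Lip}_0(M)=\mathcal F(M)^*$ be an isometric predual of $\mathcal F(M)$ (i.e. $X^*=\mathcal F(M)$ isometrically via the natural duality). Then the following are equivalent: (i) there is a compact Hausdorff topology $\tau$ on $M$ such that $X\subset \mathrm{Lip}_0(M)\cap\mathcal C_\tau(M)$; (ii) $\delta(M)$ is $\sigma(\mathcal F(M),X)$-closed.
   Context: A pointed metric space $M$ has a distinguished origin $0$. $\mathrm{Lip}_0(M)$ is the Banach space of real Lipschitz functions on $M$ vanishing at $0$ with the best Lipschitz constant as norm; $\delta(x)$ is evaluation at $x$, and the Lipschitz free space $\mathcal F(M)$ is the closed linear span of $\delta(M)$ in $\mathrm{Lip}_0(M)^*$, with $\mathcal F(M)^*=\mathrm{Lip}_0(M)$. $\mathcal C_\tau(M)$ denotes the real functions on $M$ continuous for the topology $\tau$. $\sigma(\mathcal F(M),X)$ is the topology of pointwise convergence on elements of $X$. *)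

From HB Require Import structures.
From mathcomp Require Import all_boot all_order all_algebra.
From mathcomp Require Import all_classical all_reals topology normedtype.
Set Implicit Arguments. Unset Strict Implicit. Unset Printing Implicit Defensive.
Import Order.TTheory GRing.Theory Num.Theory.
Import numFieldNormedType.Exports.
Local Open Scope classical_set_scope.
Local Open Scope ring_scope.

Section LipschitzFree.
Variables (R : realType) (M : Type).

Definition is_metric (d : M -> M -> R) : Prop :=
  [/\ (forall x y, 0 <= d x y), (forall x y, d x y = 0 <-> x = y),
      (forall x y, d x y = d y x) & (forall x y z, d x z <= d x y + d y z)].

Definition bounded_metric (d : M -> M -> R) : Prop :=
  exists C : R, forall x y, d x y <= C.

Variables (d : M -> M -> R) (x0 : M).

Definition lipschitz (f : M -> R) : Prop :=
  exists L : R, forall x y, `|f x - f y| <= L * d x y.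

Definition Lip0 (f : M -> R) : Prop := f x0 = 0 /\ lipschitz f.

Definition lipnorm (f : M -> R) : R :=
  sup [set r : R | exists x y, x <> y /\ r = `|f x - f y| / d x y].

Definition dualnorm (S : set (M -> R)) (mu : (M -> R) -> R) : R :=
  sup [set `|mu f| | f in [set f | S f /\ lipnorm f <= 1]].

Definition linear_on (S : set (M -> R)) (mu : (M -> R) -> R) : Prop :=
  forall (a : R) f g, S f -> S g -> mu (fun x => a * f x + g x) = a * mu f + mu g.

Definition bounded_on (S : set (M -> R)) (mu : (M -> R) -> R) : Prop :=
  exists C : R, forall f, S f -> `|mu f| <= C * lipnorm f.

(** F(M): linear functionals on Lip_0(M) lying in the norm-closed linear span
    of the evaluations delta(x) (elements of F(M) are identified when they
    agree on Lip_0(M)). *)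
Definition in_free (mu : (M -> R) -> R) : Prop :=
  linear_on Lip0 mu /\
  forall e : R, 0 < e -> exists s : seq (R * M),
    forall f, Lip0 f -> lipnorm f <= 1 ->
      `|mu f - \sum_(p <- s) p.1 * f p.2| <= e.

(** X is an isometric predual of F(M): a norm-closed linear subspace of
    Lip_0(M) such that restriction mu |-> mu|_X is an isometry of F(M)
    onto X^*. *)
Definition isometric_predual (X : set (M -> R)) : Prop :=
  [/\ X `<=` Lip0, X (fun _ => 0)
      /\ (forall (a : R) f g, X f -> X g -> X (fun x => a * f x + g x)),
      (forall f, Lip0 f ->
         (forall e : R, 0 < e -> exists g, X g /\ lipnorm (fun x => f x - g x) <= e) ->
         X f),
      (forall mu, in_free mu -> dualnorm X mu = dualnorm Lip0 mu) &
      (forall psi, linear_on X psi -> bounded_on X psi ->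
         exists mu, in_free mu /\ forall f, X f -> mu f = psi f)].

(** delta(M) is sigma(F(M), X)-closed in F(M). *)
Definition delta_weak_closed (X : set (M -> R)) : Prop :=
  forall mu, in_free mu ->
    (forall (n : nat) (fs : 'I_n -> M -> R), (forall i, X (fs i)) ->
       forall e : R, 0 < e -> exists x : M, forall i, `|mu (fs i) - fs i x| < e) ->
    exists x : M, forall f, Lip0 f -> mu f = f x.

End LipschitzFree.

Section Topologies.
Variables (R : realType) (M : Type).

Definition is_topology (tau : set (set M)) : Prop :=
  [/\ tau setT, tau set0,
      (forall A B, tau A -> tau B -> tau (A `&` B)) &
      (forall G : set (set M), G `<=` tau -> tau (\bigcup_(A in G) A))].

Definition top_compact (tau : set (set M)) : Prop :=
  forall G : set (set M), G `<=` tau -> setT `<=` \bigcup_(A in G) A ->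
    exists F : set (set M), [/\ finite_set F, F `<=` G & setT `<=` \bigcup_(A in F) A].

Definition top_hausdorff (tau : set (set M)) : Prop :=
  forall x y : M, x <> y -> exists A B, [/\ tau A, tau B, A x, B y & A `&` B = set0].

Definition compact_hausdorff_topology (tau : set (set M)) : Prop :=
  [/\ is_topology tau, top_compact tau & top_hausdorff tau].

Definition tau_continuous (tau : set (set M)) (f : M -> R) : Prop :=
  forall U : set R, open U -> tau (f @^-1` U).

End Topologies.

From Pilot Require Import Defs.
From HB Require Import structures.
From mathcomp Require Import all_boot all_order all_algebra.
From mathcomp Require Import all_classical all_reals topology normedtype.
From mathcomp Require Import ring lra.
Import Order.TTheory GRing.Theory Num.Theory.
Import numFieldNormedType.Exports.
Local Open Scope classical_set_scope.
Local Open Scope ring_scope.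
Set Implicit Arguments. Unset Strict Implicit.

(* (i) => (ii): if mu is a weak limit of evaluations but no evaluation, then,
   since X separates the points of F(M), every x has an f in X with
   mu f <> f x, hence a tau-neighbourhood on which |mu f - f| stays away
   from 0.  Finitely many such neighbourhoods cover M, and the finitely many
   corresponding functions define a weak neighbourhood of mu missing delta(M).
   (ii) => (i): let tau be the weak topology induced by X on M.  It is
   Hausdorff because X separates the points of M.  Along an ultrafilter U on
   M the functions of X, being uniformly bounded, have limits; the limit
   functional is bounded and linear on X, hence is some mu in F(M) = X^*.
   It is a weak limit of evaluations, so mu = delta(x), and U converges to x
   in tau. *)

Lemma far_from_half_ball (R : realFieldType) (a b c : R) :
  `|b - c| < `|a - c| / 2 -> `|a - c| / 2 < `|a - b|.
Proof. by move=> bc; have := ler_distD b a c; lra. Qed.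

Lemma seq_pos_lower_bound (R : realDomainType) (W : eqType) (ws : seq W)
    (r : W -> R) :
  (forall w, w \in ws -> 0 < r w) ->
  exists2 e, 0 < e & forall w, w \in ws -> e <= r w.
Proof.
elim: ws => [_|w ws IH pos]; first by exists 1 => // w; rewrite in_nil.
have [e e0 le_e] := IH (fun v vs => pos v (mem_behead (s := w :: ws) vs)).
exists (Num.min (r w) e); first by rewrite lt_min pos ?mem_head.
move=> v; rewrite in_cons => /predU1P [->|/le_e]; first by rewrite ge_min lexx.
by apply: le_trans; rewrite ge_min lexx orbT.
Qed.

Lemma filter_forall_in_seq (T : Type) (I : eqType) (F : set_system T)
    (P : I -> set T) (s : seq I) :
  Filter F -> (forall i, i \in s -> F (P i)) ->
  F [set t | forall i, i \in s -> P i t].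
Proof.
move=> FF; elim: s => [_|i s IH Fs].
  by apply: filterS filterT => t _ i; rewrite in_nil.
have Fs' := IH (fun j js => Fs j (mem_behead (s := i :: s) js)).
apply: filterS (filterI (Fs i (mem_head i s)) Fs') => t [Pi Ps] j.
by rewrite in_cons => /predU1P [->|/Ps].
Qed.

Lemma ultralim_bounded (R : realType) (T : Type) (U : set_system T)
    (g : T -> R) (K : R) :
  UltraFilter U -> (forall t, `|g t| <= K) -> exists2 p, g @ U --> p & `|p| <= K.
Proof.
move=> UU gK; have PU : ProperFilter U := @ultra_proper _ _ UU.
have UK : U (g @^-1` `[-K, K]).
  by apply: filterS filterT => t _; rewrite /= in_itv /= -ler_norml.
have [p [pK clp]] := @segment_compact R (-K) K (g @ U) _ UK.
exists p; last by move: pK; rewrite /= in_itv /= -ler_norml.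
move=> V pV; have [//|UnV] := in_ultra_setVsetC (g @^-1` V) UU.
by have [z [zc zV]] := clp (~` V) V UnV pV.
Qed.

Lemma seq_choice (I W : eqType) (Q : W -> Prop) (P : I -> W -> Prop) (s : seq I) :
  (forall i, i \in s -> exists2 w, Q w & P i w) ->
  exists2 ws : seq W, (forall w, w \in ws -> Q w) &
    forall i, i \in s -> exists2 w, w \in ws & P i w.
Proof.
elim: s => [_|i s IH choice_s]; first by exists [::] => // i; rewrite in_nil.
have [ws Qws Pws] := IH (fun j js => choice_s j (mem_behead (s := i :: s) js)).
have [w Qw Piw] := choice_s i (mem_head i s).
exists (w :: ws) => [v|j]; rewrite in_cons => /predU1P [->|] //; first exact: Qws.
  by exists w; rewrite ?mem_head.
by move=> /Pws [v vs Pjv]; exists v; rewrite // in_cons vs orbT.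
Qed.

Section CompactTopology.
Variables (T : Type) (tau : set (set T)).

Lemma top_compact_finite_witnesses (W : eqType) (Q : W -> Prop) (P : W -> set T) :
  top_compact tau ->
  (forall x, exists2 w, Q w & exists2 A, tau A & A x /\ A `<=` P w) ->
  exists2 ws : seq W, (forall w, w \in ws -> Q w) & forall y, exists2 w, w \in ws & P w y.
Proof.
move=> compact_tau local.
pose G := [set A | tau A /\ exists2 w, Q w & A `<=` P w].
have [F [finF FG coverF]] : exists F, [/\ finite_set F, F `<=` G &
    setT `<=` \bigcup_(A in F) A].
  apply: compact_tau => [A []//|x _].
  have [w Qw [A tauA [Ax APw]]] := local x.
  by exists A => //; split => //; exists w.
have [s sF] := (finite_seqP F).1 finF; subst F.
have [ws Qws cover] := @seq_choice _ _ Q (fun A w => A `<=` P w) s (fun A sA => (FG A sA).2).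
exists ws => // y; have [A sA Ay] := coverF y I.
by have [w ws_w APw] := cover A sA; exists w => //; exact: APw.
Qed.

Lemma ultra_top_compact :
  (forall U : set_system T, UltraFilter U ->
     exists x, forall A, tau A -> A x -> U A) ->
  top_compact tau.
Proof.
move=> ultra_cvg G tauG coverG; apply: contrapT => no_finite.
(* The complements of the finite unions of members of G generate a proper filter. *)
pose F := [set S : set T | exists2 s : seq (set T), (forall A, A \in s -> G A) &
  forall y, (forall A, A \in s -> ~ A y) -> S y].
have F_filter : Filter F.
  split; first by exists [::] => // A; rewrite in_nil.
    move=> P Q [s1 G1 P1] [s2 G2 Q2]; exists (s1 ++ s2).
      by move=> A; rewrite mem_cat => /orP [/G1|/G2].
    by move=> y out; split; [apply: P1 | apply: Q2] => A As;
      apply: out; rewrite mem_cat As ?orbT.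
  by move=> P Q PQ [s Gs P1]; exists s => // y /P1 /PQ.
have F_proper : ProperFilter F.
  apply: Build_ProperFilter_ex => P [s Gs P1]; apply: contrapT => P0.
  apply: no_finite; exists [set` s]; split => // y _; apply: contrapT => ny.
  by apply: P0; exists y; apply: P1 => A As Ay; apply: ny; exists A.
have [U [UU FU]] := ultraFilterLemma F_proper.
have PU : ProperFilter U := @ultra_proper _ _ UU.
have [x Ux] := ultra_cvg U UU.
have [A GA Ax] := coverG x I.
have UnA : U (~` A).
  by apply: FU; exists [:: A] => [B|y]; [rewrite mem_seq1 => /eqP -> | apply; rewrite mem_head].
by have [z []] := filter_ex (filterI (Ux A (tauG A GA) Ax) UnA).
Qed.

End CompactTopology.

Section LipschitzFree.
Variables (R : realType) (M : Type) (d : M -> M -> R) (x0 : M).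
Hypothesis hd : is_metric d.
Variable C : R.
Hypothesis hC : forall x y, d x y <= C.

Lemma metric_ge0 x y : 0 <= d x y. Proof. by case: hd. Qed.

Lemma metric_gt0 x y : x <> y -> 0 < d x y.
Proof.
by move=> xy; rewrite lt_def metric_ge0 andbT; apply/eqP; case: hd => _ hE _ _ /hE.
Qed.

Lemma metric_xx x : d x x = 0. Proof. by case: hd => _ hE _ _; apply/hE. Qed.

Lemma lip_quotients_ub (f : M -> R) k : (forall x y, `|f x - f y| <= k * d x y) ->
  ubound [set r | exists x y, x <> y /\ r = `|f x - f y| / d x y] k.
Proof. by move=> fk _ [x [y [xy ->]]]; rewrite ler_pdivrMr ?metric_gt0. Qed.

Lemma lipnorm_ge0 (f : M -> R) : Defs.lipschitz d f -> 0 <= lipnorm d f.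
Proof.
move=> [L fL]; rewrite /lipnorm; set S := [set r | _].
have [->|/set0P [r Sr]] := eqVneq S set0; first by rewrite sup0.
apply: le_trans (ub_le_sup (ex_intro _ L (lip_quotients_ub fL)) Sr).
by case: Sr => x [y [_ ->]]; rewrite divr_ge0 ?metric_ge0.
Qed.

Lemma lipschitz_lipnorm (f : M -> R) :
  Defs.lipschitz d f -> forall x y, `|f x - f y| <= lipnorm d f * d x y.
Proof.
move=> lip_f x y; have [<-|xy] := pselect (x = y).
  by rewrite subrr normr0 mulr_ge0 ?lipnorm_ge0 ?metric_ge0.
have [L fL] := lip_f; rewrite -ler_pdivrMr ?metric_gt0 //.
by apply: ub_le_sup; [exists L; exact: lip_quotients_ub | exists x, y].
Qed.

Lemma lipnorm_le (f : M -> R) k :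
  0 <= k -> (forall x y, `|f x - f y| <= k * d x y) -> lipnorm d f <= k.
Proof.
move=> k0 fk; rewrite /lipnorm; set S := [set r | _].
have [->|/set0P S_n0] := eqVneq S set0; first by rewrite sup0.
exact: ge_sup S_n0 (lip_quotients_ub fk).
Qed.

Lemma Lip0_0 : Lip0 d x0 (fun _ => 0).
Proof. by split => //; exists 0 => x y; rewrite subrr normr0 mul0r. Qed.

Lemma Lip0_dist y : Lip0 d x0 (fun z => d z y - d x0 y).
Proof.
split; first by rewrite subrr.
exists 1 => z w; rewrite mul1r ler_norml; case: hd => _ _ sym tri.
have := tri z w y; have := tri w z y; rewrite (sym w z) => ? ?.
by apply/andP; split; lra.
Qed.

Lemma Lip0_separates_points x y : (forall f, Lip0 d x0 f -> f x = f y) -> x = y.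
Proof.
move=> eq_xy; have := eq_xy _ (Lip0_dist y); rewrite metric_xx => dxy.
by case: hd => _ hE _ _; apply/hE; lra.
Qed.

Lemma Lip0_le (f : M -> R) : Lip0 d x0 f -> forall y, `|f y| <= lipnorm d f * C.
Proof.
move=> [f0 lip_f] y; have := lipschitz_lipnorm lip_f y x0.
by rewrite f0 subr0 => /le_trans; apply; rewrite ler_wpM2l ?lipnorm_ge0.
Qed.

Lemma linear_on0 (S : set (M -> R)) (mu : (M -> R) -> R) :
  S (fun _ => 0) -> linear_on S mu -> mu (fun _ => 0) = 0.
Proof.
move=> S0 lin; have := lin 1 _ _ S0 S0.
rewrite (_ : (fun _ => 1 * 0 + 0) = (fun _ => 0)); last first.
  by apply: funext => x; rewrite mulr0 addr0.
by rewrite mul1r => /eqP; rewrite -subr_eq subrr eq_sym => /eqP.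
Qed.

Lemma linear_onZ (S : set (M -> R)) (mu : (M -> R) -> R) (a : R) (f : M -> R) :
  S (fun _ => 0) -> linear_on S mu -> S f -> mu (fun x => a * f x) = a * mu f.
Proof.
move=> S0 lin Sf; have := lin a f _ Sf S0; rewrite (linear_on0 S0 lin) addr0.
by rewrite (_ : (fun x => a * f x + 0) = (fun x => a * f x)) // funeqE => x; rewrite addr0.
Qed.

Lemma in_free_delta x : in_free d x0 (fun f => f x).
Proof.
split=> // e e0; exists [:: (1, x)] => f _ _.
by rewrite big_seq1 mul1r subrr normr0 ltW.
Qed.

Lemma in_free_sub (mu nu : (M -> R) -> R) :
  in_free d x0 mu -> in_free d x0 nu -> in_free d x0 (fun f => mu f - nu f).
Proof.
move=> [lin_mu approx_mu] [lin_nu approx_nu]; split.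
  by move=> a f g Lf Lg; rewrite lin_mu // lin_nu //; ring.
move=> e e0; have e20 : 0 < e / 2 by rewrite divr_gt0.
have [s1 mu_s1] := approx_mu _ e20; have [s2 nu_s2] := approx_nu _ e20.
exists (s1 ++ [seq (- p.1, p.2) | p <- s2]) => f Lf f1.
rewrite big_cat big_map /=.
rewrite (eq_bigr (r := s2) (fun p => - (p.1 * f p.2))) ?sumrN; last by move=> p _; rewrite mulNr.
have := mu_s1 f Lf f1; have := nu_s2 f Lf f1.
move: (\sum_(p <- s1) _) (\sum_(p <- s2) _) => S1 S2 nu_S2 mu_S1.
rewrite (_ : _ - _ - _ = (mu f - S1) - (nu f - S2)); last by ring.
by apply: le_trans (ler_normB _ _) _; lra.
Qed.

Lemma in_free_bounded (mu : (M -> R) -> R) : in_free d x0 mu ->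
  exists B, forall f, Lip0 d x0 f -> lipnorm d f <= 1 -> `|mu f| <= B.
Proof.
move=> [_ approx]; have [s mu_s] := approx 1 ltr01.
have C_ge0 : 0 <= C := le_trans (metric_ge0 x0 x0) (hC x0 x0).
exists (1 + \sum_(p <- s) `|p.1| * C) => f Lf f1.
rewrite -(subrK (\sum_(p <- s) p.1 * f p.2) (mu f)).
apply: le_trans (ler_normD _ _) (lerD (mu_s f Lf f1) _).
apply: le_trans (ler_norm_sum _ _ _) (ler_sum _ _) => p _.
by rewrite normrM ler_wpM2l // (le_trans (Lip0_le Lf _)) // ler_piMl.
Qed.

Lemma dualnorm_ge (mu : (M -> R) -> R) (f : M -> R) : in_free d x0 mu ->
  Lip0 d x0 f -> lipnorm d f <= 1 -> `|mu f| <= dualnorm d (Lip0 d x0) mu.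
Proof.
move=> free_mu Lf f1; have [B mu_B] := in_free_bounded free_mu.
apply: ub_le_sup; last by exists f.
by exists B => _ [g [Lg g1] <-]; exact: mu_B.
Qed.

Lemma vanishing_dualnorm0 (S : set (M -> R)) (mu : (M -> R) -> R) :
  S (fun _ => 0) -> (forall f, S f -> mu f = 0) -> dualnorm d S mu = 0.
Proof.
move=> S0 mu0; rewrite /dualnorm (_ : [set _ | _ in _] = [set 0]) ?sup1 //.
apply/seteqP; split => [_ [g [Sg _] <-]|_ ->] /=; first by rewrite mu0 // normr0.
exists (fun _ => 0); last by rewrite mu0 ?normr0.
by split => //; apply: lipnorm_le => // x y; rewrite subrr normr0 mul1r metric_ge0.
Qed.

Lemma dualnorm0_vanishing (mu : (M -> R) -> R) : in_free d x0 mu ->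
  dualnorm d (Lip0 d x0) mu = 0 -> forall f, Lip0 d x0 f -> mu f = 0.
Proof.
move=> free_mu norm0 f [f0 lip_f]; have lin := free_mu.1.
have := lipnorm_ge0 lip_f; rewrite le_eqVlt => /predU1P [L0|Lpos].
  rewrite (_ : f = fun _ => 0) ?(linear_on0 Lip0_0 lin) // funeqE => y.
  have := lipschitz_lipnorm lip_f y x0.
  by rewrite f0 subr0 -L0 mul0r normr_le0 => /eqP.
set L := lipnorm d f in Lpos.
have g_lip x y : `|L^-1 * f x - L^-1 * f y| <= 1 * d x y.
  rewrite -mulrBr normrM gtr0_norm ?invr_gt0 // mul1r ler_pdivrMl //.
  exact: lipschitz_lipnorm.
have Lg : Lip0 d x0 (fun x => L^-1 * f x) by split; [rewrite f0 mulr0 | exists 1].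
have := dualnorm_ge free_mu Lg (lipnorm_le ler01 g_lip).
rewrite norm0 normr_le0 (linear_onZ _ Lip0_0 lin) //.
by rewrite mulf_eq0 invr_eq0 gt_eqF //= => /eqP.
Qed.

Section Predual.
Variable X : set (M -> R).
Hypothesis hX : isometric_predual d x0 X.

Lemma predual_Lip0 f : X f -> Lip0 d x0 f.
Proof. by case: hX => + _ _ _ _; apply. Qed.

Lemma predual_vanishing (mu : (M -> R) -> R) : in_free d x0 mu ->
  (forall f, X f -> mu f = 0) -> forall f, Lip0 d x0 f -> mu f = 0.
Proof.
(* The isometry gives ||mu|| = ||mu restricted to X|| = 0. *)
move=> free_mu mu0; apply: (dualnorm0_vanishing free_mu).
by case: hX => _ [X0 _] _ /(_ mu free_mu) <- _; exact: vanishing_dualnorm0.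
Qed.

Lemma predual_eq (mu nu : (M -> R) -> R) : in_free d x0 mu -> in_free d x0 nu ->
  (forall f, X f -> mu f = nu f) -> forall f, Lip0 d x0 f -> mu f = nu f.
Proof.
move=> free_mu free_nu eq_X f Lf; apply/eqP; rewrite -subr_eq0; apply/eqP.
by apply: (predual_vanishing (in_free_sub free_mu free_nu)) Lf => g Xg; rewrite eq_X ?subrr.
Qed.

Lemma predual_separates_points x y : x <> y -> exists2 f, X f & f x != f y.
Proof.
move=> xy; apply: contrapT => no_sep; apply: xy; apply: Lip0_separates_points.
have eq_X g : X g -> g x = g y.
  by move=> Xg; apply: contrapT => ne; apply: no_sep; exists g => //; exact/eqP.
exact: (predual_eq (in_free_delta x) (in_free_delta y) eq_X).
Qed.

Lemma ultralimit_in_free (U : set_system M) : UltraFilter U ->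
  exists mu, in_free d x0 mu /\ forall f, X f -> f @ U --> mu f.
Proof.
move=> UU; have PU : ProperFilter U := @ultra_proper _ _ UU.
have lim_ex f : X f -> exists2 p, f @ U --> p & `|p| <= lipnorm d f * C.
  by move=> Xf; apply: ultralim_bounded UU (Lip0_le (predual_Lip0 Xf)).
pose psi (f : M -> R) := lim (f @ U).
have psi_cvg f : X f -> f @ U --> psi f.
  by move=> /lim_ex [p fp _]; rewrite /psi (cvg_lim _ fp).
have [mu [free_mu mu_psi]] : exists mu, in_free d x0 mu /\ forall f, X f -> mu f = psi f.
  case: hX => _ _ _ _; apply.
    move=> a f g Xf Xg.
    have lim_comb : (fun x => a * f x + g x) @ U --> a * psi f + psi g.
      by apply: cvgD; [apply: cvgMl_tmp|]; exact: psi_cvg.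
    exact: cvg_lim lim_comb.
  exists C => f /lim_ex [p fp p_le].
  by rewrite /psi (cvg_lim _ fp) // [C * _]mulrC.
by exists mu; split => // f Xf; rewrite mu_psi //; exact: psi_cvg.
Qed.

Definition weak_limit_of_deltas (mu : (M -> R) -> R) : Prop :=
  forall s : seq (M -> R), (forall f, f \in s -> X f) ->
  forall e : R, 0 < e -> exists x : M, forall f, f \in s -> `|mu f - f x| < e.

Lemma weak_limit_of_deltasP (mu : (M -> R) -> R) :
  weak_limit_of_deltas mu <->
  (forall (n : nat) (fs : 'I_n -> M -> R), (forall i, X (fs i)) ->
     forall e : R, 0 < e -> exists x : M, forall i, `|mu (fs i) - fs i x| < e).
Proof.
split=> [lim_mu n fs Xfs e e0 | lim_mu s Xs e e0].
  have X_codom f : f \in codom fs -> X f by move=> /codomP [i ->].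
  have [x near_x] := lim_mu (codom fs) X_codom e e0.
  by exists x => i; apply: near_x; exact: codom_f.
pose fs (i : 'I_(size s)) := nth (fun _ => 0) s i.
have [x near_x] := lim_mu _ fs (fun i => Xs _ (mem_nth _ (ltn_ord i))) e e0.
exists x => f fs_f; have index_lt : (index f s < size s)%N by rewrite index_mem.
by have := near_x (Ordinal index_lt); rewrite /fs /= nth_index.
Qed.

Lemma compact_continuous_delta_weak_closed (tau : set (set M)) :
  top_compact tau -> (forall f, X f -> tau_continuous tau f) ->
  delta_weak_closed d x0 X.
Proof.
move=> compact_tau X_cont mu free_mu /weak_limit_of_deltasP mu_lim.
apply: contrapT => not_delta.
have sep x : exists2 f, X f & mu f != f x.
  apply: contrapT => no_sep; apply: not_delta; exists x.
  have eq_X f : X f -> mu f = f x.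
    by move=> Xf; apply: contrapT => ne; apply: no_sep; exists f => //; exact/eqP.
  exact: (predual_eq free_mu (in_free_delta x) eq_X).
pose Q (w : (M -> R) * R) := X w.1 /\ 0 < w.2.
pose P (w : (M -> R) * R) := [set y | w.2 <= `|mu w.1 - w.1 y|].
have local x : exists2 w, Q w & exists2 A, tau A & A x /\ A `<=` P w.
  have [f Xf ne] := sep x; pose e := `|mu f - f x| / 2.
  have e0 : 0 < e by rewrite divr_gt0 // normr_gt0 subr_eq0.
  exists (f, e) => //; exists (f @^-1` ball (f x) e); first exact: X_cont _ (ball_open _ _).
  split; first exact: ballxx.
  by move=> y /= fxy; apply/ltW/far_from_half_ball; rewrite distrC.
have [ws Qws cover] := top_compact_finite_witnesses compact_tau local.
have [e e0 le_e] := seq_pos_lower_bound (fun w ws_w => (Qws w ws_w).2).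
have X_ws f : f \in map fst ws -> X f by move=> /mapP [w /Qws [Xw _] ->].
have [x near_x] := mu_lim (map fst ws) X_ws e e0.
have [w ws_w Pwx] := cover x.
by have := near_x w.1 (map_f fst ws_w); rewrite ltNge (le_trans (le_e w ws_w) Pwx).
Qed.

Definition weak_nbhd (s : seq (M -> R)) (e : R) (a : M) : set M :=
  [set y | forall f, f \in s -> `|f y - f a| < e].

Definition weak_topology : set (set M) :=
  [set A | forall a, A a -> exists s e,
     [/\ 0 < e, forall f, f \in s -> X f & weak_nbhd s e a `<=` A]].

Lemma weak_topology_is_topology : is_topology weak_topology.
Proof.
split=> [a _|//|A B tauA tauB a [Aa Ba]|G tauG a [A GA Aa]].
- by exists [::], 1; split => // f; rewrite in_nil.
- have [s1 [e1 [e10 X1 sub1]]] := tauA a Aa.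
  have [s2 [e2 [e20 X2 sub2]]] := tauB a Ba.
  exists (s1 ++ s2), (Num.min e1 e2); split; first by rewrite lt_min e10 e20.
    by move=> f; rewrite mem_cat => /orP [/X1|/X2].
  move=> y near_y; split; [apply: sub1 | apply: sub2] => f fs;
    apply: lt_le_trans (near_y f _) _; rewrite ?mem_cat ?fs ?orbT ?ge_min ?lexx ?orbT //.
- have [s [e [e0 Xs sub]]] := tauG A GA a Aa.
  by exists s, e; split => // y /sub Ay; exists A.
Qed.

Lemma weak_topology_continuous f : X f -> tau_continuous weak_topology f.
Proof.
move=> Xf V openV a /= Va.
have /nbhs_ballP [e e0 sub] : nbhs (f a) V by move: openV; rewrite openE; apply.
exists [:: f], e; split => // [g|y /= near_y]; first by rewrite mem_seq1 => /eqP ->.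
by apply: sub; rewrite /ball /= distrC; apply: near_y; rewrite mem_head.
Qed.

Lemma weak_topology_hausdorff : top_hausdorff weak_topology.
Proof.
move=> x y /predual_separates_points [f Xf fxy].
pose e := `|f x - f y| / 2.
have e0 : 0 < e by rewrite divr_gt0 // normr_gt0 subr_eq0.
exists (f @^-1` ball (f x) e), (f @^-1` ball (f y) e).
split; [exact: weak_topology_continuous Xf _ (ball_open _ _)..|exact: ballxx|exact: ballxx|].
apply/seteqP; split => // z [/= xz yz].
have := @far_from_half_ball _ (f x) (f z) (f y); rewrite /ball /= distrC in yz.
by move=> /(_ yz); rewrite ltNge ltW.
Qed.

Lemma weak_topology_ultra_cvg : delta_weak_closed d x0 X ->
  forall U : set_system M, UltraFilter U ->
  exists x, forall A, weak_topology A -> A x -> U A.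
Proof.
move=> deltas_closed U UU; have PU : ProperFilter U := @ultra_proper _ _ UU.
have [mu [free_mu mu_cvg]] := ultralimit_in_free UU.
have near_mu (s : seq (M -> R)) e : (forall f, f \in s -> X f) -> 0 < e ->
    U [set y | forall f, f \in s -> `|mu f - f y| < e].
  move=> Xs e0; apply: filter_forall_in_seq => f /Xs Xf.
  exact: cvgr_dist_lt (mu_cvg f Xf) _ e0.
have [x mu_x] : exists x, forall f, Lip0 d x0 f -> mu f = f x.
  apply: (deltas_closed mu free_mu); apply/weak_limit_of_deltasP => s Xs e e0.
  exact: filter_ex (near_mu s e Xs e0).
exists x => A /(_ x) openA Ax; have [s [e [e0 Xs sub]]] := openA Ax.
apply: filterS sub _; apply: filterS (near_mu s e Xs e0) => y near_y f fs.
by rewrite distrC -mu_x ?near_y //; exact/predual_Lip0/Xs.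
Qed.

Lemma weak_topology_compact : delta_weak_closed d x0 X -> top_compact weak_topology.
Proof. by move=> deltas_closed; apply: ultra_top_compact; exact: weak_topology_ultra_cvg. Qed.

End Predual.
End LipschitzFree.

Theorem proposition3p2 (R : realType) (M : Type) (d : M -> M -> R) (x0 : M)
  (hd : is_metric d) (hb : bounded_metric d) (X : set (M -> R))
  (hX : isometric_predual d x0 X) :
  (exists tau : set (set M),
      compact_hausdorff_topology tau /\ forall f, X f -> tau_continuous tau f)
  <-> delta_weak_closed d x0 X.
Proof.
have [C hC] := hb.
split=> [[tau [[_ compact_tau _] X_cont]]|deltas_closed].
  exact: (compact_continuous_delta_weak_closed hd hC hX compact_tau X_cont).
exists (weak_topology X); split; last exact: weak_topology_continuous.
split; first exact: weak_topology_is_topology.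
  exact: (weak_topology_compact hd hC hX deltas_closed).
exact: (weak_topology_hausdorff hd hC hX).
Qed.
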